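(* For nonnegative integers $i$ and $k$, $$\binom{i+k}{2k}_q=\binom{i}{k}_q+\sum_{r=1}^kq^{k+r}\binom{i+r-1}{k+r}_q.$$
   Context: For nonnegative integers $n$, $[n]!_q=\prod_{j=1}^n\frac{1-q^j}{1-q}$ (with $[0]!_q=1$), and for integers $0\le k\le n$, $\binom{n}{k}_q=\frac{[n]!_q}{[k]!_q[n-k]!_q}$ (Gaussian polynomial); set $\binom{n}{k}_q=0$ if $k<0$ or $k>n$. *)

From mathcomp Require Import all_boot all_order all_algebra.
From mathcomp Require Import fraction.
Set Implicit Arguments. Unset Strict Implicit. Unset Printing Implicit Defensive.
Import GRing.Theory.
Local Open Scope ring_scope.

Notation RF := {fraction {poly int}}.

Definition qX : RF := tofrac 'X.

Definition qint (j : nat) : RF := (1 - qX ^+ j) / (1 - qX).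

Definition qfact (n : nat) : RF := \prod_(1 <= j < n.+1) qint j.

Definition qbinom (n k : nat) : RF :=
  if (k <= n)%N then qfact n / (qfact k * qfact (n - k)) else 0.

From mathcomp Require Import all_boot all_order all_algebra.
From mathcomp Require Import fraction.
From mathcomp Require Import ring.
Import GRing.Theory.
Local Open Scope ring_scope.

(* The q-Pascal rule [n+1, m+1] = [n, m] + q^(m+1) [n, m+1] comes from
   [a + b]_q = [a]_q + q^a [b]_q.  Applying it k times, always to the term
   without the power of q, expands [a + k, b + k] into [a, b] plus
   k correction terms; the theorem is the case a = i, b = k. *)

Lemma qX_expn_neq1 j : (0 < j)%N -> qX ^+ j != 1.
Proof.
move=> j_gt0; rewrite /qX -tofracXn -tofrac1 tofrac_eq.
apply/negP=> /eqP/(congr1 (size : {poly int} -> nat)).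
by rewrite size_polyXn size_poly1; case: j j_gt0.
Qed.

Lemma qint_neq0 j : (0 < j)%N -> qint j != 0.
Proof.
move=> j_gt0; rewrite /qint mulf_neq0 ?invr_eq0 // subr_eq0 eq_sym.
  exact: qX_expn_neq1.
by rewrite -(expr1 qX) qX_expn_neq1.
Qed.

Lemma qintD a b : qint (a + b) = qint a + qX ^+ a * qint b.
Proof. by rewrite /qint exprD; ring. Qed.

Lemma qfact0 : qfact 0 = 1.
Proof. by rewrite /qfact big_geq. Qed.

Lemma qfactS n : qfact n.+1 = qfact n * qint n.+1.
Proof. by rewrite /qfact big_nat_recr. Qed.

Lemma qfact_neq0 n : qfact n != 0.
Proof.
elim: n => [|n IHn]; first by rewrite qfact0 oner_neq0.
by rewrite qfactS mulf_neq0 ?qint_neq0.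
Qed.

Lemma qbinom_addn m d : qbinom (m + d) m = qfact (m + d) / (qfact m * qfact d).
Proof. by rewrite /qbinom leq_addr addKn. Qed.

Lemma qbinomnn n : qbinom n n = 1.
Proof. by have := qbinom_addn n 0; rewrite addn0 qfact0 mulr1 divff ?qfact_neq0. Qed.

Lemma qbinom_small n k : (n < k)%N -> qbinom n k = 0.
Proof. by rewrite /qbinom ltnNge => /negbTE ->. Qed.

(* The q-Pascal rule in factorial form, with (N, A, B, a, b, c) standing for
   ([m+d+1]!, [m]!, [d]!, [m+1], [d+1], q^(m+1)). *)
Lemma pascal_fraction_identity (F : fieldType) (N A B a b c : F) :
  A != 0 -> B != 0 -> a != 0 -> b != 0 ->
  N * (a + c * b) / (A * a * (B * b)) = N / (A * (B * b)) + c * (N / (A * a * B)).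
Proof. by move=> *; field; apply/and4P. Qed.

Lemma qbinom_pascal n m :
  qbinom n.+1 m.+1 = qbinom n m + qX ^+ m.+1 * qbinom n m.+1.
Proof.
case: (ltngtP m n) => [lt_mn | lt_nm | ->];
  [| by rewrite !qbinom_small ?mulr0 ?addr0 // ltnS ltnW
   | by rewrite !qbinomnn qbinom_small // mulr0 addr0].
have [d ->] : exists d, n = (m + d.+1)%N.
  by exists (n - m.+1)%N; rewrite addnS -addSn subnKC.
have -> : qbinom (m + d.+1) m.+1 = qbinom (m.+1 + d) m.+1 by rewrite addSnnS.
rewrite -addSn !qbinom_addn addSn qfactS -addSn qintD -addSnnS (qfactS m) (qfactS d).
by rewrite pascal_fraction_identity ?qfact_neq0 ?qint_neq0.
Qed.

Lemma qbinom_addn_telescope a b k :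
  qbinom (a + k) (b + k) =
  qbinom a b + \sum_(1 <= r < k.+1) qX ^+ (b + r) * qbinom (a + r - 1) (b + r).
Proof.
elim: k => [|k IHk]; first by rewrite !addn0 big_geq // addr0.
by rewrite big_nat_recr //= addrA -IHk !addnS qbinom_pascal subn1.
Qed.

Theorem lemma6 (i k : nat) :
  qbinom (i + k) (2 * k) =
  qbinom i k + \sum_(1 <= r < k.+1) qX ^+ (k + r) * qbinom (i + r - 1) (k + r).
Proof. by rewrite mul2n -addnn qbinom_addn_telescope. Qed.
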